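(* There exist absolute constants $c, C > 0$, an infinite set $S$ of positive integers, and for each $n \in S$ a union-closed family $\mathcal{F}_n \subset \mathcal{P}([n])$ with $\mathcal{F}_n \neq \emptyset$, $\mathcal{F}_n \neq \{\emptyset\}$ and $|\mathcal{F}_n| \to \infty$ as $n \to \infty$ in $S$, such that for every $n \in S$, $$c\,\frac{\log_2 \log_2 |\mathcal{F}_n|}{\log_2 |\mathcal{F}_n|} \;\leq\; \mathrm{AOD}(\mathcal{F}_n) \;\leq\; C\,\frac{\log_2 \log_2 |\mathcal{F}_n|}{\log_2 |\mathcal{F}_n|}.$$
   Context: $[n] = \{1,2,\ldots,n\}$. A family $\mathcal{F}$ of subsets of a set $X$ is union-closed if $A \cup B \in \mathcal{F}$ whenever $A, B \in \mathcal{F}$. For a finite nonempty family $\mathcal{F} \subset \mathcal{P}(X)$ and $x \in X$, the abundance of $x$ is $\gamma_x = |\{A \in \mathcal{F} : x \in A\}|/|\mathcal{F}|$. For $\mathcal{F} \neq \emptyset, \{\emptyset\}$, the average overlap density is $$\mathrm{AOD}(\mathcal{F}) = \frac{1}{|\mathcal{F}\setminus\{\emptyset\}|}\sum_{A \in \mathcal{F}\setminus\{\emptyset\}} \frac{1}{|A|}\sum_{x \in A} \gamma_x = \mathbb{E}_{A \in \mathcal{F}\setminus\{\emptyset\}}\,\mathbb{E}_{B \in \mathcal{F}}\left[\frac{|A\cap B|}{|A|}\right],$$ with $A$ and $B$ uniform. *)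

From mathcomp Require Import all_boot all_order all_algebra.
From mathcomp Require Import reals exp.
Set Implicit Arguments. Unset Strict Implicit. Unset Printing Implicit Defensive.
Import Order.TTheory GRing.Theory Num.Theory.
Local Open Scope ring_scope.

Definition union_closed (T : finType) (F : {set {set T}}) : Prop :=
  forall A B, A \in F -> B \in F -> A :|: B \in F.

Definition abundance (R : realFieldType) (T : finType) (F : {set {set T}}) (x : T) : R :=
  #|[set A in F | x \in A]|%:R / #|F|%:R.

Definition AOD (R : realFieldType) (T : finType) (F : {set {set T}}) : R :=
  (#|F :\ set0|%:R)^-1 *
  \sum_(A in F :\ set0) ((#|A|%:R)^-1 * \sum_(x in A) abundance R F x).

Definition log2 (R : realType) (x : R) : R := ln x / ln 2.

(* For q >= 2 cut [n], n = q * (q^2)^q, into q blocks of length (q^2)^q, and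
   for each g : [q] -> [q] take the set selecting in block i the initial
   segment of length (q^2)^(g i) - 1.  These q^q sets form a union-closed
   family F (unions take pointwise maxima).  A point of some member lies in at
   least q^(q-1) members, so every abundance met in a nonempty member is at
   least 1/q and AOD(F) >= 1/q.  In a member whose largest level is J, all but
   a 1/q fraction of the points lie beyond level J - 1 and have abundance at
   most (q - J)/q; averaging 1 + q - J over all g gives at most 3 q^q, so
   AOD(F) <= 6/q.  Finally q = 2^(2^c) puts log2 log2 |F| / log2 |F| between
   1/q and 2/q, which yields the theorem with constants 1/2 and 6.
   The file develops counting and power-sum lemmas, the combinatorics of the
   construction, the abundance bounds, and the choice of parameters, in order. *)

From mathcomp Require Import all_boot all_order all_algebra.
From mathcomp Require Import reals exp.
From mathcomp Require Import zify lra.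
Set Implicit Arguments. Unset Strict Implicit. Unset Printing Implicit Defensive.

Lemma card_ord_pred (q : nat) (f : nat -> bool) :
  #|[set y : 'I_q | f y]| = \sum_(0 <= y < q) f y.
Proof.
rewrite -sum1dep_card big_mkcond /= -(big_mkord xpredT (fun y => (f y : nat))).
by apply: eq_bigr => i _; case: (f i).
Qed.

Lemma sum_indicator_ge (t q : nat) : t <= q -> \sum_(0 <= y < q) (t <= y) = q - t.
Proof.
move=> tq; rewrite (big_cat_nat (n := t) (leq0n t) tq) /=.
rewrite (eq_big_nat _ _ (F2 := fun _ => 0)); last first.
  by move=> i /andP[_ it]; rewrite leqNgt it.
rewrite (eq_big_nat _ _ (F2 := fun _ => 1) (m := t) (n := q)); last first.
  by move=> i /andP[ti _]; rewrite ti.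
rewrite !sum_nat_const_nat; lia.
Qed.

Lemma sum_indicator_lt (t q : nat) : t <= q -> \sum_(0 <= y < q) (y < t) = t.
Proof.
move=> tq; rewrite (big_cat_nat (n := t) (leq0n t) tq) /=.
rewrite (eq_big_nat _ _ (F2 := fun _ => 1)); last first.
  by move=> i /andP[_ it]; rewrite it.
rewrite (eq_big_nat _ _ (F2 := fun _ => 0) (m := t) (n := q)); last first.
  by move=> i /andP[ti _]; rewrite ltnNge ti.
rewrite !sum_nat_const_nat; lia.
Qed.

Lemma sum_blocks (B k : nat) (F : nat -> nat) :
  \sum_(0 <= x < k * B) F x = \sum_(0 <= i < k) \sum_(0 <= y < B) F (i * B + y).
Proof.
elim: k => [|k IH]; first by rewrite mul0n !big_geq.
rewrite big_nat_recr //= -IH mulSn addnC (big_cat_nat (n := k * B) (leq0n _) (leq_addr B _)) /=.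
congr (_ + _); rewrite -{1}(add0n (k * B)) big_addn addKn.
by apply: eq_bigr => i _; rewrite addnC.
Qed.

Lemma card_ffun_box (I J : finType) (P : I -> pred J) :
  #|[set g : {ffun I -> J} | [forall i, g i \in P i]]| = \prod_(i : I) #|P i|.
Proof.
transitivity #|(family P : simpl_pred {dffun forall i : I, J})|.
  by apply: eq_card => g; rewrite inE; apply/forallP/familyP.
by rewrite card_family foldrE big_map big_enum.
Qed.

Lemma card_ffun_coord (I J : finType) (i0 : I) (P : {set J}) :
  #|[set g : {ffun I -> J} | g i0 \in P]| = #|P| * #|J| ^ #|I|.-1.
Proof.
pose Q := fun i : I => if i == i0 then [pred y | y \in P] else predT.
have -> : [set g : {ffun I -> J} | g i0 \in P]
        = [set g : {ffun I -> J} | [forall i, g i \in Q i]].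
  apply/setP=> g; rewrite !inE; apply/idP/forallP.
    by move=> Pg i; rewrite /Q; case: eqP => [->|].
  by move=> /(_ i0); rewrite /Q eqxx.
rewrite card_ffun_box (bigD1 i0) //= /Q eqxx; congr (_ * _).
rewrite (eq_bigr (fun _ => #|J|)); last by move=> i /negbTE ->; apply: eq_card.
by rewrite prod_nat_const cardC1 -subn1.
Qed.

Lemma bernoulli_nat (a p : nat) : a ^ p.+1 + p.+1 * a ^ p <= a.+1 ^ p.+1.
Proof.
elim: p => [|p IH]; first by rewrite expn1 expn0 expn1 mul1n addn1.
move: IH; rewrite !expnS; set u := a ^ p; set X := a.+1 ^ p; nia.
Qed.

Lemma pow_succ_double (b q : nat) : b < q -> 2 * b ^ q <= b.+1 ^ q.
Proof.
case: q => [//|p] bq; have := bernoulli_nat b p.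
have : b ^ p.+1 <= p.+1 * b ^ p by rewrite expnS leq_mul2r (ltnW bq) orbT.
lia.
Qed.

Lemma pow_sub_halving (q d : nat) : d <= q -> (q - d) ^ q * 2 ^ d <= q ^ q.
Proof.
elim: d => [|d IH] dq; first by rewrite subn0 expn0 muln1.
have IHd := IH (ltnW dq).
have e : q - d = (q - d.+1).+1 by lia.
have := @pow_succ_double (q - d.+1) q; rewrite -e => /(_ ltac:(lia)) dbl.
rewrite expnS; nia.
Qed.

Lemma sum_pow2 (q : nat) : \sum_(t < q) 2 ^ t.+1 + 2 = 2 ^ q.+1.
Proof.
elim: q => [|q IH]; first by rewrite big_ord0.
rewrite big_ord_recr /=; move: IH; set S := \sum_(i < q) _; rewrite !expnS; lia.
Qed.

Lemma sum_succ_pow_le (q : nat) : \sum_(t < q) t.+1 ^ q <= 2 * q ^ q.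
Proof.
rewrite -(@leq_pmul2r (2 ^ q)) ?expn_gt0 // big_distrl /=.
apply: (@leq_trans (\sum_(t < q) q ^ q * 2 ^ t.+1)).
  apply: leq_sum => t _; have tq := ltn_ord t.
  have := @pow_sub_halving q (q - t.+1) ltac:(lia).
  rewrite (_ : q - (q - t.+1) = t.+1); last by lia.
  have -> : 2 ^ q = 2 ^ (q - t.+1) * 2 ^ t.+1 by rewrite -expnD; congr (_ ^ _); lia.
  by rewrite mulnA => h; rewrite leq_mul2r h orbT.
rewrite -big_distrr /= (mulnC 2) -mulnA leq_mul2l; apply/orP; right.
have := sum_pow2 q; rewrite expnS; set S := \sum_(i < q) _; lia.
Qed.

Section Levels.
Variable q : nat.
Hypothesis q_gt1 : 1 < q.

Definition base := q * q.
Definition level (j : nat) := base ^ j - 1.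
Definition block := base ^ q.

Lemma base_gt1 : 1 < base. Proof. rewrite /base; nia. Qed.

Lemma base_pow_gt0 j : 0 < base ^ j.
Proof. by rewrite expn_gt0; have := base_gt1; lia. Qed.

Lemma block_gt0 : 0 < block. Proof. exact: base_pow_gt0. Qed.

Lemma level_mono a b : a <= b -> level a <= level b.
Proof. by move=> ab; rewrite /level leq_sub2r // leq_pexp2l // ltnW // base_gt1. Qed.

Lemma level_ltE a b : (level a < level b) = (a < b).
Proof.
rewrite /level -(ltn_exp2l a b base_gt1).
have := base_pow_gt0 a; have := base_pow_gt0 b; case: ltnP; lia.
Qed.

Lemma level_lt_block j : j <= q -> level j < block.
Proof.
move=> jq; have := base_pow_gt0 j.
have : base ^ j <= block by rewrite leq_pexp2l // ltnW // base_gt1.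
rewrite /level; lia.
Qed.

(* Consecutive levels grow by a factor q^2, so the points below level J - 1
   form a small part of any member whose largest level is J. *)
Lemma level_step J : 0 < J -> q * q * level J.-1 <= level J.
Proof.
case: J => // J _; rewrite /level expnS /=.
have := base_pow_gt0 J; rewrite /base; nia.
Qed.

Lemma pow_self_split : q ^ q = q * q ^ q.-1.
Proof. by case: q q_gt1 => // p _; rewrite expnS. Qed.

Lemma pow_self_ge : q <= q ^ q.
Proof. by rewrite -{1}(expn1 q) leq_pexp2l // ltnW. Qed.

Definition top (g : {ffun 'I_q -> 'I_q}) := \max_(i : 'I_q) (g i : nat).

Lemma top_attained (g : {ffun 'I_q -> 'I_q}) : exists i0, top g = g i0.
Proof.
have q0 : 0 < #|'I_q| by rewrite card_ord; lia.
by case: (eq_bigmax (fun i : 'I_q => (g i : nat)) q0) => i0 e; exists i0.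
Qed.

Lemma top_lt (g : {ffun 'I_q -> 'I_q}) : top g < q.
Proof. by case: (top_attained g) => i0 ->. Qed.

Lemma top_ge (g : {ffun 'I_q -> 'I_q}) (i : 'I_q) : g i <= top g.
Proof. exact: (@leq_bigmax _ (fun i : 'I_q => (g i : nat)) i). Qed.

(* Summing q - top g over all g counts pairs (g, t) with g <= t pointwise. *)
Lemma sum_top : \sum_(g : {ffun 'I_q -> 'I_q}) (q - top g) = \sum_(t : 'I_q) t.+1 ^ q.
Proof.
have e g : q - top g = \sum_(t : 'I_q) (top g <= t).
  by rewrite -(sum_indicator_ge (ltnW (top_lt g))) big_mkord.
rewrite (eq_bigr _ (fun g _ => e g)) exchange_big /=; apply: eq_bigr => t _.
rewrite -big_mkcond /= sum1dep_card.
have -> : [set g : {ffun 'I_q -> 'I_q} | top g <= t]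
        = [set g : {ffun 'I_q -> 'I_q} | [forall i, g i \in [pred y : 'I_q | y <= t]]].
  apply/setP => g; rewrite !inE; apply/idP/forallP.
    by move=> le_t i; rewrite inE; apply: leq_trans le_t; apply: top_ge.
  by move=> le_t; apply/bigmax_leqP => i _; have := le_t i; rewrite inE.
rewrite card_ffun_box (eq_bigr (fun _ => t.+1)) ?prod_nat_const ?card_ord //.
move=> i _; rewrite -(sum_indicator_lt (ltn_ord t)) -card_ord_pred.
by apply: eq_card => y; rewrite !inE.
Qed.

Lemma sum_top_le : \sum_(g : {ffun 'I_q -> 'I_q}) (1 + (q - top g)) <= 3 * q ^ q.
Proof.
rewrite big_split /= sum1_card card_ffun !card_ord sum_top.
have := sum_succ_pow_le q; lia.
Qed.

End Levels.

Section Construction.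
Variables (q n : nat).
Hypothesis q_gt1 : 1 < q.
Hypothesis n_def : n = q * block q.

Local Notation block := (block q).
Local Notation level := (level q).

(* The value of g at a natural index (0 outside 'I_q). *)
Definition at_nat (g : {ffun 'I_q -> 'I_q}) (i : nat) : nat :=
  if insub i is Some i' then nat_of_ord (g i') else 0.

Definition lset (g : {ffun 'I_q -> 'I_q}) : {set 'I_n} :=
  [set x : 'I_n | x %% block < level (at_nat g (x %/ block))].

Definition fam : {set {set 'I_n}} := lset @: setT.

Lemma at_nat_ord g (i : 'I_q) : at_nat g i = g i.
Proof. by rewrite /at_nat valK. Qed.

Lemma block_index_lt (x : 'I_n) : x %/ block < q.
Proof. by rewrite ltn_divLR ?(block_gt0 q_gt1) // -n_def. Qed.

Definition block_of (x : 'I_n) : 'I_q := Ordinal (block_index_lt x).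

Lemma mem_lset g (x : 'I_n) : (x \in lset g) = (x %% block < level (g (block_of x))).
Proof. by rewrite inE -(at_nat_ord g (block_of x)). Qed.

Definition fmax (g h : {ffun 'I_q -> 'I_q}) : {ffun 'I_q -> 'I_q} :=
  [ffun i => if g i <= h i then h i else g i].

Lemma lsetU g h : lset g :|: lset h = lset (fmax g h).
Proof.
apply/setP=> x; rewrite in_setU !mem_lset ffunE.
move: (g _) (h _) (x %% block) => a b y.
have or_lt a' b' : a' <= b' -> (y < level a') || (y < level b') = (y < level b').
  move=> /(level_mono q_gt1) ab; apply/idP/idP => [/orP[]|->]; rewrite ?orbT //; lia.
case ab: (a <= b); first by rewrite or_lt.
by rewrite orbC or_lt // ltnW // ltnNge ab.
Qed.

Lemma fam_union_closed : union_closed fam.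
Proof.
move=> A B /imsetP[g _ ->] /imsetP[h _ ->]; rewrite lsetU.
by apply/imsetP; exists (fmax g h).
Qed.

Lemma block_pos_lt (i : 'I_q) (y : nat) : y < block -> i * block + y < n.
Proof. move=> yB; rewrite n_def; have := ltn_ord i; nia. Qed.

Lemma block_div (i y : nat) : y < block -> (i * block + y) %/ block = i.
Proof. by move=> yB; rewrite divnMDl ?(block_gt0 q_gt1) // divn_small // addn0. Qed.

Lemma block_mod (i y : nat) : y < block -> (i * block + y) %% block = y.
Proof. by move=> yB; rewrite modnMDl modn_small. Qed.

(* Distinct functions give distinct sets: compare at the first position of
   block i not selected by the smaller of the two levels. *)
Lemma lset_inj : injective lset.
Proof.
have le_of_eq g h i : lset g = lset h -> g i <= h i.
  move=> e; rewrite leqNgt; apply/negP => hg.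
  have yB : level (h i) < block by apply/(level_lt_block q_gt1)/ltnW.
  pose x := Ordinal (block_pos_lt i yB).
  have ex : block_of x = i by apply: val_inj; rewrite /= block_div.
  have : x \in lset g by rewrite mem_lset ex /= block_mod // (level_ltE q_gt1).
  by rewrite e mem_lset ex /= block_mod // ltnn.
move=> g h e; apply/ffunP => i; apply/val_inj/eqP.
by rewrite eqn_leq !le_of_eq.
Qed.

Lemma card_fam : #|fam| = q ^ q.
Proof. by rewrite card_imset ?cardsT ?card_ffun ?card_ord //; apply: lset_inj. Qed.

(* The number of members containing x depends only on the position of x in
   its block: it counts the admissible values of one coordinate. *)
Lemma card_containing (x : 'I_n) :
  #|[set A in fam | x \in A]| = #|[set y : 'I_q | x %% block < level y]| * q ^ q.-1.
Proof.
have -> : [set A in fam | x \in A] = lset @: [set g | x \in lset g].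
  apply/setP=> A; rewrite !inE; apply/andP/imsetP.
    by case=> /imsetP[g _ ->] xg; exists g => //; rewrite inE.
  by case=> g; rewrite inE => xg ->; split => //; apply/imsetP; exists g.
rewrite card_imset; last exact: lset_inj.
have := card_ffun_coord (block_of x) [set y : 'I_q | x %% block < level y].
rewrite !card_ord => <-.
by apply: eq_card => g; rewrite inE mem_lset !inE.
Qed.

Lemma containing_lb g (x : 'I_n) : x \in lset g ->
  q ^ q.-1 <= #|[set A in fam | x \in A]|.
Proof.
move=> xg; rewrite card_containing -{1}(mul1n (q ^ _)) leq_mul2r.
by apply/orP; right; apply/card_gt0P; exists (g (block_of x)); rewrite inE -mem_lset.
Qed.

Lemma containing_ub (J : nat) (x : 'I_n) : 0 < J -> J <= q -> level J.-1 <= x %% block ->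
  #|[set A in fam | x \in A]| <= (q - J) * q ^ q.-1.
Proof.
move=> J0 Jq lo; rewrite card_containing leq_mul2r; apply/orP; right.
rewrite -(sum_indicator_ge Jq) -card_ord_pred; apply: subset_leq_card.
apply/subsetP=> y; rewrite !inE => ylev.
have : level J.-1 < level y by lia.
rewrite (level_ltE q_gt1); lia.
Qed.

Lemma card_by_blocks (P : nat -> nat -> bool) :
  #|[set x : 'I_n | P (x %/ block) (x %% block)]| =
  \sum_(0 <= i < q) \sum_(0 <= y < block) P i y.
Proof.
rewrite (card_ord_pred n (fun x => P (x %/ block) (x %% block))) n_def sum_blocks.
apply: eq_bigr => i _; apply: eq_big_nat => y /andP[_ yB].
by rewrite block_div // block_mod.
Qed.

Lemma card_lset_ge (g : {ffun 'I_q -> 'I_q}) (i0 : 'I_q) : level (g i0) <= #|lset g|.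
Proof.
have lev_le := ltnW (level_lt_block q_gt1 (ltnW (ltn_ord (g i0)))).
apply: (@leq_trans #|[set x : 'I_n | (x %/ block == i0) && (x %% block < level (g i0))]|).
  rewrite (card_by_blocks (fun i y => (i == i0) && (y < level (g i0)))).
  have -> : \sum_(0 <= i < q) \sum_(0 <= y < block) ((i == i0) && (y < level (g i0)))
         = \sum_(0 <= i < q) (i == i0) * level (g i0).
    apply: eq_bigr => i _; case: (i == i0) => /=; last by rewrite big1_eq.
    by rewrite mul1n sum_indicator_lt.
  rewrite big_mkord (bigD1 i0) //= eqxx mul1n big1 ?addn0 // => i ne.
  by rewrite val_eqE (negbTE ne).
apply: subset_leq_card; apply/subsetP => x; rewrite inE => /andP[/eqP e lo].
by rewrite mem_lset (_ : block_of x = i0) //; apply: val_inj.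
Qed.

Lemma card_low_part (g : {ffun 'I_q -> 'I_q}) (s : nat) : s <= block ->
  #|[set x in lset g | x %% block < s]| <= q * s.
Proof.
move=> sB; apply: (@leq_trans #|[set x : 'I_n | x %% block < s]|).
  by apply: subset_leq_card; apply/subsetP => x; rewrite !inE => /andP[].
rewrite (card_by_blocks (fun _ y => y < s)) (eq_bigr (fun _ => s)).
  by rewrite sum_nat_const_nat subn0 mulnC.
by move=> i _; rewrite sum_indicator_lt.
Qed.


Lemma lset_below_top (g : {ffun 'I_q -> 'I_q}) (x : 'I_n) : x \in lset g -> x %% block < level (top g).
Proof. by rewrite mem_lset => /leq_trans; apply; apply/(level_mono q_gt1)/top_ge. Qed.

Lemma card_lset_top (g : {ffun 'I_q -> 'I_q}) : level (top g) <= #|lset g|.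
Proof. by case: (top_attained q_gt1 g) => i0 ->; apply: card_lset_ge. Qed.

Lemma top_pos (g : {ffun 'I_q -> 'I_q}) : lset g != set0 -> 0 < top g.
Proof. by case/set0Pn => x /lset_below_top; case: (top g). Qed.


Lemma set0_in_fam : set0 \in fam.
Proof.
apply/imsetP; exists [ffun _ => Ordinal (ltnW q_gt1)] => //.
by apply/setP => x; rewrite mem_lset ffunE inE.
Qed.

Lemma card_fam_nonempty : #|fam :\ set0| = (q ^ q).-1.
Proof. by rewrite -card_fam (cardsD1 set0 fam) set0_in_fam. Qed.

Lemma fam_proper : fam != set0 /\ fam != [set set0].
Proof.
have := pow_self_ge q_gt1; rewrite -card_fam => big_fam; split.
  by apply/set0Pn; exists set0; apply: set0_in_fam.
by apply/eqP => e; move: big_fam; rewrite e cards1; lia.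
Qed.

Lemma fam_nonempty_image : fam :\ set0 = lset @: [set g | lset g != set0].
Proof.
apply/setP => A; rewrite !inE; apply/andP/imsetP.
  by case=> ne /imsetP[g _ e]; exists g => //; rewrite inE -e.
by case=> g; rewrite inE => ne ->; split => //; apply/imsetP; exists g.
Qed.


Lemma card_low_part_top (g : {ffun 'I_q -> 'I_q}) : lset g != set0 ->
  q * #|[set x in lset g | x %% block < level (top g).-1]| <= #|lset g|.
Proof.
move=> ne; have J0 := top_pos ne.
have low := @card_low_part g (level (top g).-1)
  (ltnW (level_lt_block q_gt1 (leq_trans (leq_pred _) (ltnW (top_lt q_gt1 g))))).
apply: (leq_trans (leq_mul (leqnn q) low)); rewrite mulnA.
exact: leq_trans (level_step q_gt1 J0) (card_lset_top g).
Qed.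

End Construction.

(* The ordered-ring theories are imported only now: their lemma names
   (e.g. eq_bigmax) shadow the nat versions used above. *)
Import Order.TTheory GRing.Theory Num.Theory.
Local Open Scope ring_scope.

Definition mean_abundance (R : realFieldType) (T : finType) (F : {set {set T}})
    (A : {set T}) : R :=
  (#|A|%:R)^-1 * \sum_(x in A) abundance R F x.

Section AbundanceBounds.
Variable R : realFieldType.
Variables (q n : nat).
Hypothesis q_gt1 : (1 < q)%N.
Hypothesis n_def : n = (q * block q)%N.

Let q_gt0 : 0 < q%:R :> R. Proof. by rewrite ltr0n; lia. Qed.

Let card_fam_gt0 : 0 < #|fam q n|%:R :> R.
Proof. by rewrite (card_fam q_gt1 n_def) ltr0n expn_gt0; lia. Qed.

Lemma abundance_lb (g : {ffun 'I_q -> 'I_q}) (x : 'I_n) :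
  x \in lset n g -> 1 / q%:R <= abundance R (fam q n) x.
Proof.
move=> xg; rewrite /abundance ler_pdivlMr // (card_fam q_gt1 n_def).
rewrite (pow_self_split q_gt1) natrM mul1r mulrA mulVf ?mul1r ?ler_nat ?gt_eqF //.
exact: containing_lb xg.
Qed.

Lemma abundance_le1 (x : 'I_n) : abundance R (fam q n) x <= 1.
Proof.
rewrite /abundance ler_pdivrMr // mul1r ler_nat.
by apply/subset_leq_card/subsetP => A; rewrite inE => /andP[].
Qed.

Lemma abundance_ub (J : nat) (x : 'I_n) : (0 < J)%N -> (J <= q)%N ->
  (level q J.-1 <= x %% block q)%N -> abundance R (fam q n) x <= (q - J)%:R / q%:R.
Proof.
move=> J0 Jq lo; rewrite /abundance (card_fam q_gt1 n_def).
rewrite ler_pdivrMr ?ltr0n ?expn_gt0 ?(ltnW q_gt1) // mulrAC ler_pdivlMr //.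
rewrite -!natrM ler_nat (pow_self_split q_gt1) mulnCA [X in (X <= _)%N]mulnC.
by rewrite leq_mul2l (containing_ub q_gt1 n_def J0 Jq lo) orbT.
Qed.

Lemma mean_abundance_lb (g : {ffun 'I_q -> 'I_q}) : lset n g != set0 ->
  1 / q%:R <= mean_abundance R (fam q n) (lset n g).
Proof.
move=> ne; rewrite /mean_abundance ler_pdivlMl ?ltr0n ?card_gt0 //.
rewrite [X in X <= _]mulr_natl -sumr_const.
by apply: ler_sum => x xg; apply: abundance_lb xg.
Qed.

(* Splitting a member at level top g - 1: the low part is small, and the high
   part consists of points of abundance at most (q - top g)/q. *)
Lemma mean_abundance_ub (g : {ffun 'I_q -> 'I_q}) : lset n g != set0 ->
  mean_abundance R (fam q n) (lset n g) <= (1 + (q - top g))%:R / q%:R.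
Proof.
move=> ne; have J0 := top_pos q_gt1 n_def ne; have Jq := ltnW (top_lt q_gt1 g).
set A := lset n g; set J := top g; set low := fun x : 'I_n => (x %% block q < level q J.-1)%N.
have split_sum : \sum_(x in A) abundance R (fam q n) x <=
                 #|[set x in A | low x]|%:R + #|A|%:R * ((q - J)%:R / q%:R).
  apply: (@le_trans _ _ (\sum_(x in A) ((low x : nat)%:R + (q - J)%:R / q%:R))).
    apply: ler_sum => x xA; rewrite /low; case: ltnP => lo /=.
      have : 0 <= (q - J)%:R / q%:R :> R by rewrite divr_ge0 ?ler0n.
      by have := abundance_le1 x; lra.
    by rewrite add0r; apply: abundance_ub.
  rewrite big_split /=; apply: lerD; last by rewrite sumr_const [X in _ <= X]mulr_natl.
  by rewrite -natr_sum ler_nat -big_mkcondr /= sum1dep_card.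
rewrite /mean_abundance ler_pdivrMl ?ltr0n ?card_gt0 //; apply: (le_trans split_sum).
rewrite natrD mulrDl mulrDr lerD2r mul1r ler_pdivlMr // -natrM ler_nat mulnC.
by rewrite /low /J /A; apply: card_low_part_top.
Qed.

Let card_nonempty_gt0 : 0 < #|fam q n :\ set0|%:R :> R.
Proof.
rewrite (card_fam_nonempty q_gt1 n_def) ltr0n -ltnS prednK ?expn_gt0 ?(ltnW q_gt1) //.
exact: leq_trans q_gt1 (pow_self_ge q_gt1).
Qed.

Lemma AOD_lb : 1 / q%:R <= AOD R (fam q n).
Proof.
rewrite /AOD ler_pdivlMl // [X in X <= _]mulr_natl -sumr_const.
apply: ler_sum => A; rewrite !inE => /andP[ne /imsetP[g _ eA]].
by rewrite eA; apply: mean_abundance_lb; rewrite -eA.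
Qed.

Lemma AOD_ub : AOD R (fam q n) <= 6 / q%:R.
Proof.
rewrite /AOD ler_pdivrMl // fam_nonempty_image big_imset /=; last first.
  by move=> g h _ _; apply: (lset_inj q_gt1 n_def).
apply: (@le_trans _ _ (\sum_(g : {ffun 'I_q -> 'I_q}) ((1 + (q - top g))%:R / q%:R : R))).
  rewrite big_mkcond /=; apply: ler_sum => g _; rewrite inE.
  by case: ifP => [/mean_abundance_ub // | _]; rewrite divr_ge0 ?ler0n.
rewrite -mulr_suml -natr_sum -fam_nonempty_image (card_fam_nonempty q_gt1 n_def).
rewrite ler_pdivrMr // -!mulrA mulVf ?gt_eqF // mulr1 -natrM ler_nat.
apply: (leq_trans (sum_top_le q_gt1)); have := pow_self_ge q_gt1; lia.
Qed.

End AbundanceBounds.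

Lemma log2_pow2 (R : realType) (N : nat) : log2 ((2 ^ N)%:R : R) = N%:R.
Proof.
rewrite /log2 natrX lnXn ?ltr0n // -[X in X / _]mulr_natr mulrAC divff ?mul1r //.
by rewrite gt_eqF // ln_gt0 // ltr1n.
Qed.

Lemma ratio_within_factor2 (R : realFieldType) (a b Q : R) :
  0 < a -> 0 < Q -> 0 <= b -> b <= a ->
  (1/2) * ((b + a) / (a * Q)) <= 1 / Q /\ 6 / Q <= 6 * ((b + a) / (a * Q)).
Proof.
move=> a0 Q0 b0 ba; rewrite invfM [(b + a) * _]mulrA !mul1r.
have t1 : 1 <= (b + a) / a by rewrite ler_pdivlMr // mul1r; lra.
have t2 : (b + a) / a <= 2 by rewrite ler_pdivrMr //; lra.
have u0 : 0 < Q^-1 by rewrite invr_gt0.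
move: t1 t2 u0; set t := (b + a) / a; set u := Q^-1 => t1 t2 u0; split; nra.
Qed.

Definition side (c : nat) : nat := 2 ^ (2 ^ c).
Definition dim (c : nat) : nat := side c * block (side c).

Lemma side_gt1 c : (1 < side c)%N.
Proof. by rewrite /side -{1}(expn0 2) ltn_exp2l // expn_gt0. Qed.

Lemma dim_gt c : (c < dim c)%N.
Proof.
apply: (@leq_trans (side c)).
  exact: leq_trans (ltn_expl c (ltnSn 1)) (ltnW (ltn_expl _ (ltnSn 1))).
by rewrite /dim -{1}(muln1 (side c)) leq_mul2l block_gt0 ?orbT // side_gt1.
Qed.

(* The parameter c with dim c = n, recovered by search (dim is injective). *)
Definition param (n : nat) : nat := find (fun c => dim c == n) (iota 0 n.+1).

Lemma dim_param c : dim (param (dim c)) = dim c.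
Proof.
have hs : has (fun c' => dim c' == dim c) (iota 0 (dim c).+1).
  by apply/hasP; exists c; rewrite ?eqxx // mem_iota /= add0n ltnS ltnW // dim_gt.
have := nth_find 0 hs; rewrite nth_iota ?add0n; first by move/eqP.
by move: hs; rewrite has_find size_iota.
Qed.

Lemma dim_le_card_cube (q : nat) : (1 < q)%N -> (q * block q <= (q ^ q) ^ 3)%N.
Proof.
move=> q_gt1; rewrite /block /base expnMn mulnA.
have -> : ((q ^ q) ^ 3 = q ^ q * q ^ q * q ^ q)%N by rewrite !expnS expn0 muln1 mulnA.
by rewrite !leq_mul // pow_self_ge.
Qed.

(* For q = side c the family has q^q = 2^(2^c q) members, so
   log2 |F| = 2^c q and log2 log2 |F| = c + 2^c: the ratio in the theorem is
   within a factor 2 of 1/q. *)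
Lemma loglog_ratio_bounds (R : realType) (c : nat) :
  (1/2) * (log2 (log2 ((side c ^ side c)%:R : R)) / log2 ((side c ^ side c)%:R : R))
    <= 1 / (side c)%:R /\
  6 / (side c)%:R
    <= 6 * (log2 (log2 ((side c ^ side c)%:R : R)) / log2 ((side c ^ side c)%:R : R)).
Proof.
have e1 : (side c ^ side c = 2 ^ (2 ^ c * side c))%N by rewrite /side expnM.
have e2 : (2 ^ c * side c = 2 ^ (c + 2 ^ c))%N by rewrite /side expnD.
rewrite e1 log2_pow2 e2 log2_pow2 -e2 natrM natrD.
apply: ratio_within_factor2; rewrite ?ltr0n ?expn_gt0 ?ler0n ?ler_nat //.
exact: ltnW (ltn_expl c (ltnSn 1)).
Qed.

Theorem theorem2 (R : realType) :
  exists (c C : R), 0 < c /\ 0 < C /\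
  exists (S : pred nat) (F : forall n : nat, {set {set 'I_n}}),
    (forall n, S n -> 0 < n)%N /\
    (forall N : nat, exists n, S n /\ (N <= n)%N) /\
    (forall n, S n ->
       [/\ union_closed (F n), F n != set0 & F n != [set set0]]) /\
    (forall M : nat, exists N : nat, forall n, S n -> (N <= n)%N -> (M <= #|F n|)%N) /\
    (forall n, S n ->
       c * (log2 (log2 (#|F n|%:R : R)) / log2 (#|F n|%:R : R)) <= AOD R (F n) /\
       AOD R (F n) <= C * (log2 (log2 (#|F n|%:R : R)) / log2 (#|F n|%:R : R))).
Proof.
exists (1/2), 6; split; first by rewrite divr_gt0 ?ltr0n.
split; first by rewrite ltr0n.
pose S n := n == dim (param n); pose q n := side (param n).
have shape n : S n -> n = (q n * block (q n))%N by move/eqP.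
exists S, (fun n => fam (q n) n); split.
  by move=> n /eqP ->; apply: leq_ltn_trans (leq0n _) (dim_gt _).
split; first by move=> N; exists (dim N); rewrite /S dim_param eqxx (ltnW (dim_gt N)).
split.
  move=> n /shape n_def; have [ne ne1] := fam_proper (side_gt1 _) n_def.
  by split; first exact: fam_union_closed (side_gt1 _) n_def.
split.
  move=> M; exists (M ^ 3)%N => n /shape n_def le_n.
  rewrite (card_fam (side_gt1 _) n_def) -(@leq_exp2r _ _ 3) //.
  by apply: leq_trans le_n _; rewrite {1}n_def dim_le_card_cube ?side_gt1.
move=> n /shape n_def; rewrite (card_fam (side_gt1 _) n_def).
have [lb ub] := loglog_ratio_bounds R (param n).
split; first exact: le_trans lb (AOD_lb R (side_gt1 _) n_def).
exact: le_trans (AOD_ub R (side_gt1 _) n_def) ub.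
Qed.
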